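(* Let $G$ and $G'$ be graphs. If there exists a chordal graph $F$ of treewidth at most $2$ such that the number of homomorphisms from $F$ to $G$ differs from the number of homomorphisms from $F$ to $G'$, then $G$ and $G'$ are distinguishable by EB-1WL.
   Context: All graphs are finite, simple and undirected; the graphs $G,G'$ have no isolated vertices; $N(v)$ denotes the neighborhood of $v$. A homomorphism from $F=(V_F,E_F)$ to $G=(V,E)$ is a map $h:V_F\to V$ with $\{h(a),h(b)\}\in E$ for every $\{a,b\}\in E_F$. A graph is chordal if it has no induced cycle of length $\ge4$. An ordered edge of $G=(V,E)$ is a pair $(u,v)$ with $\{u,v\}\in E$. EB-1WL coloring: $\mathrm{eb}^{(0)}(G,(u,v))=1$ for every ordered edge, and $\mathrm{eb}^{(\ell+1)}(G,(u,v)) = \big(\mathrm{eb}^{(\ell)}(G,(u,v)),\ \{\!\{\mathrm{eb}^{(\ell)}(G,(u,x)) : x\in N(u)\}\!\},\ \{\!\{(\mathrm{eb}^{(\ell)}(G,(u,y)),\mathrm{eb}^{(\ell)}(G,(v,y))) : y\in N(u)\cap N(v)\}\!\},\ \{\!\{\mathrm{eb}^{(\ell)}(G,(v,z)) : z\in N(v)\}\!\}\big)$. $\mathrm{eb}^{(\ell)}(G)$ is the multiset of $\mathrm{eb}^{(\ell)}(G,(u,v))$ over all ordered edges. Graphs are distinguishable by EB-1WL if they have different numbers of vertices or there is $\ell$ with $\mathrm{eb}^{(\ell)}(G)\neq\mathrm{eb}^{(\ell)}(G')$. Colors are nested tuples/multisets, comparable across graphs. *)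

From HB Require Import structures.
From mathcomp Require Import all_boot.
From mathcomp Require Import finmap multiset.

Set Implicit Arguments.
Unset Strict Implicit.
Unset Printing Implicit Defensive.
Local Open Scope mset_scope.
Local Open Scope nat_scope.

Definition simple_graph (V : finType) (e : rel V) : Prop :=
  symmetric e /\ irreflexive e.

Definition no_isolated (V : finType) (e : rel V) : Prop :=
  forall v : V, exists u : V, e v u.

Definition hom_count (VF V : finType) (eF : rel VF) (e : rel V) : nat :=
  #|[set h : {ffun VF -> V} | [forall a, forall b, eF a b ==> e (h a) (h b)]]|.

(* Chordal: no induced cycle c_0 ... c_(k-1) (distinct vertices) of length k >= 4,
   i.e. no injective c : 'I_k -> V such that c i, c j are adjacent exactly when
   i, j are cyclically consecutive. *)
Definition chordal (V : finType) (e : rel V) : Prop :=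
  ~ exists (k : nat) (c : 'I_k -> V),
      [/\ 4 <= k, injective c &
        forall i j : 'I_k,
          e (c i) (c j) = (val j == (val i).+1 %% k) || (val i == (val j).+1 %% k)].

(* A (finite) tree: nonempty, simple, connected, with exactly |T| - 1 edges
   (counted as ordered pairs: 2 (|T| - 1)). *)
Definition is_tree (T : finType) (t : rel T) : Prop :=
  [/\ 0 < #|T|, simple_graph t, (forall x y : T, connect t x y) &
      #|[set p : T * T | t p.1 p.2]| = 2 * (#|T| - 1)].

Definition tree_decomposition (V : finType) (e : rel V)
    (T : finType) (t : rel T) (B : T -> {set V}) : Prop :=
  [/\ is_tree t,
      (forall v : V, exists i : T, v \in B i),
      (forall u v : V, e u v -> exists i : T, (u \in B i) && (v \in B i)) &
      (forall (v : V) (i j : T), v \in B i -> v \in B j ->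
         connect [rel a b | [&& t a b, v \in B a & v \in B b]] i j)].

Definition treewidth_le (V : finType) (e : rel V) (k : nat) : Prop :=
  exists (T : finType) (t : rel T) (B : T -> {set V}),
    tree_decomposition e t B /\ forall i : T, #|B i| <= k.+1.

(* Colours of EB-1WL at level l: a type common to all graphs.
   Level 0: unit (the constant colour 1); level l+1: the 4-tuple
   (old colour, multiset, multiset of pairs, multiset). *)
Fixpoint colorT (l : nat) : choiceType :=
  match l with
  | 0 => unit
  | l.+1 => (colorT l * {mset colorT l} * {mset (colorT l * colorT l)%type}
             * {mset colorT l})%type
  end.

(* eb^(l)(G,(u,v)); defined for all pairs, only used on ordered edges. *)
Fixpoint eb (V : finType) (e : rel V) (l : nat) : V -> V -> colorT l :=
  match l return V -> V -> colorT l with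
  | 0 => fun _ _ => tt
  | k.+1 => fun u v =>
      (eb e k u v,
       seq_mset [seq eb e k u x | x <- enum V & e u x],
       seq_mset [seq (eb e k u y, eb e k v y) | y <- enum V & e u y && e v y],
       seq_mset [seq eb e k v z | z <- enum V & e v z])
  end.

Definition eb_graph (V : finType) (e : rel V) (l : nat) : {mset colorT l} :=
  seq_mset [seq eb e l p.1 p.2 | p <- enum [set p : V * V | e p.1 p.2]].

Definition eb_distinguishable (V V' : finType) (e : rel V) (e' : rel V') : Prop :=
  #|V| <> #|V'| \/ exists l : nat, eb_graph e l <> eb_graph e' l.

From mathcomp Require Import all_boot.
From mathcomp Require Import finmap multiset.
From mathcomp Require Import ssralg ring zify.
From Stdlib Require Import Classical.

Set Implicit Arguments.
Unset Strict Implicit.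
Unset Printing Implicit Defensive.
Local Open Scope mset_scope.
Local Open Scope nat_scope.

(* Write hom(F, G) as a sum, over all maps from the vertices of F to those of G, of a product of
   vertex weights and edge weights over a vertex set S of F (initially all of F, with the adjacency
   of G as edge weights).  Every nonempty S contains a vertex w whose neighbours in S are at most
   two and pairwise adjacent: treewidth at most 2 gives a vertex of degree at most 2 in every
   induced subgraph, and chordality lets one choose it simplicial.  Summing out w leaves a sum of
   the same shape over S minus w with one new factor: a sum over all vertices of G (no neighbour),
   a vertex weight summing over the neighbours of a vertex (one neighbour), or an edge weight
   summing over the common neighbours of an edge (two neighbours).  These are the aggregations of
   EB-1WL, so by induction every weight is the same function of the edge colours in G and in G'.
   Finally the sum of such a function over all vertices is determined by the multiset of edge
   colours, because degrees can be read off the colours and no vertex is isolated. *)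

Definition induced (V : finType) (e : rel V) (X : {set V}) :=
  [rel x y | [&& x \in X, y \in X & e x y]].

Definition nb_in (V : finType) (e : rel V) (S : {set V}) w := [set b in S | e w b].

Lemma nb_in_D1 (V : finType) (e : rel V) (S : {set V}) w b :
  irreflexive e -> b \in nb_in e S w -> b \in S :\ w.
Proof.
move=> irr; rewrite !inE => /andP[-> wb]; rewrite andbT.
by apply: contraTneq wb => ->; rewrite irr.
Qed.

Definition clique (V : finType) (e : rel V) (Q : {set V}) :=
  forall a b, a \in Q -> b \in Q -> a != b -> e a b.

Lemma cliqueP (V : finType) (e : rel V) (Q : {set V}) :
  reflect (clique e Q) [forall a in Q, forall b in Q, (a != b) ==> e a b].
Proof.
apply: (iffP forall_inP) => [cQ a b aQ bQ ab | cQ a aQ].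
  by move/forall_inP/(_ b bQ): (cQ a aQ); rewrite ab.
by apply/forall_inP => b bQ; apply/implyP; apply: cQ.
Qed.

Lemma nb_in_sub (V : finType) (e : rel V) (S : {set V}) w : nb_in e S w \subset S.
Proof. by apply/subsetP => x; rewrite inE => /andP[]. Qed.

Lemma induced_component_sub (V : finType) (e : rel V) (X : {set V}) x y :
  x \in X -> connect (induced e X) x y -> y \in X.
Proof.
move=> xX /connectP[p pth ->]; elim: p x xX pth => //= z p IH x _ /andP[/and3P[_ zX _]].
exact: IH.
Qed.

Lemma sum_seq_mset (K : choiceType) (s : seq K) (g : K -> nat) :
  \sum_(c <- seq_mset s) g c = \sum_(c <- s) g c.
Proof. exact/perm_big/perm_eq_seq_mset. Qed.

(** * Functions determined by EB-1WL colours *)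

(* [colorT l.+1] with its product structure exposed, so that projections typecheck. *)
Definition colorT_succ l :=
  (colorT l * {mset colorT l} * {mset (colorT l * colorT l)%type} * {mset colorT l})%type.

Fixpoint color_swap (l : nat) : colorT l -> colorT l :=
  match l return colorT l -> colorT l with
  | 0 => id
  | k.+1 => fun c : colorT_succ k =>
      (color_swap c.1.1.1, c.2, seq_mset [seq (p.2, p.1) | p <- (c.1.2 : seq _)], c.1.1.2)
  end.

Lemma eb_swap (V : finType) (e : rel V) l u v :
  eb e l v u = color_swap (eb e l u v).
Proof.
elim: l => [//|l IH] /=; rewrite IH; congr (_, _, _, _).
apply/eq_seq_msetP; rewrite perm_sym.
apply: perm_trans (perm_map _ (perm_eq_seq_mset _)) _; rewrite -map_comp.
by rewrite (@eq_filter _ _ (fun y => e v y && e u y)) // => y; rewrite andbC.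
Qed.

Definition deg (V : finType) (e : rel V) (u : V) := #|e u|.

Lemma size_eb_nb (V : finType) (e : rel V) l u v :
  size (eb e l.+1 u v : colorT_succ l).1.1.2 = deg e u.
Proof.
rewrite -sum1_size sum_seq_mset big_map big_filter big_enum_cond.
by rewrite /deg -sum1_card; apply: eq_bigl.
Qed.

Lemma eb_graph_sum (V : finType) (e : rel V) l (g : colorT l -> nat) :
  \sum_(p : V * V | e p.1 p.2) g (eb e l p.1 p.2) = \sum_(c <- eb_graph e l) g c.
Proof.
rewrite /eb_graph sum_seq_mset big_map big_enum /=.
by apply: eq_bigl => p; rewrite inE.
Qed.

Lemma sum_edges_deg (V : finType) (e : rel V) (b : V -> nat) d :
  \sum_(p : V * V | e p.1 p.2 && (deg e p.1 == d)) b p.1 =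
  d * \sum_(u | deg e u == d) b u.
Proof.
rewrite [RHS]big_distrr /=.
rewrite (eq_bigl (fun p : V * V => (deg e p.1 == d) && e p.1 p.2)) => [|p]; last first.
  by rewrite andbC.
rewrite -(pair_big_dep (fun u => deg e u == d) (fun u v => e u v) (fun u _ => b u)) /=.
apply: eq_bigr => u /eqP <-.
by rewrite sum_nat_const mulnC.
Qed.

Lemma deg_gt0 (V : finType) (e : rel V) u : no_isolated e -> 0 < deg e u.
Proof. by move=> /(_ u)[v euv]; apply/card_gt0P; exists v. Qed.

Lemma sum_by_deg (V : finType) (e : rel V) (b : V -> nat) : no_isolated e ->
  \sum_u b u = \sum_(d < #|V|.+1 | 0 < d) \sum_(u | deg e u == d) b u.
Proof.
have deg_lt u : deg e u < #|V|.+1 by rewrite ltnS max_card.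
move=> nE; rewrite (partition_big (fun u => inord (deg e u) : 'I_#|V|.+1)
                     (fun d : 'I_#|V|.+1 => 0 < d)) => [|u _]; last first.
  by rewrite inordK ?deg_gt0.
apply: eq_bigr => d _; apply: eq_bigl => u.
by rewrite -val_eqE /= inordK.
Qed.

Section ColorDetermined.
Variables (V V' : finType) (e : rel V) (e' : rel V').

Definition edge_det l (f : V -> V -> nat) (f' : V' -> V' -> nat) :=
  exists g : colorT l -> nat,
    (forall u v, e u v -> f u v = g (eb e l u v)) /\
    (forall u v, e' u v -> f' u v = g (eb e' l u v)).

Definition vertex_det l (a : V -> nat) (a' : V' -> nat) :=
  exists g : colorT l -> nat,
    (forall u v, e u v -> a u = g (eb e l u v)) /\
    (forall u v, e' u v -> a' u = g (eb e' l u v)).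

Lemma edge_det_succ l f f' : edge_det l f f' -> edge_det l.+1 f f'.
Proof.
by case=> g [H H']; exists (fun c : colorT_succ l => g c.1.1.1); split=> u v /= ?;
  [rewrite H | rewrite H'].
Qed.

Lemma vertex_det_succ l a a' : vertex_det l a a' -> vertex_det l.+1 a a'.
Proof.
by case=> g [H H']; exists (fun c : colorT_succ l => g c.1.1.1); split=> u v /= ?;
  [rewrite (H u v) | rewrite (H' u v)].
Qed.

Lemma eq_edge_det l f1 f2 f1' f2' :
  (forall u v, e u v -> f1 u v = f2 u v) -> (forall u v, e' u v -> f1' u v = f2' u v) ->
  edge_det l f1 f1' -> edge_det l f2 f2'.
Proof.
move=> E E' [g [H H']]; exists g.
by split=> u v huv; [rewrite -E // H | rewrite -E' // H'].
Qed.

Lemma eq_vertex_det l a1 a2 a1' a2' : a1 =1 a2 -> a1' =1 a2' ->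
  vertex_det l a1 a1' -> vertex_det l a2 a2'.
Proof.
move=> E E' [g [H H']]; exists g.
by split=> u v huv; [rewrite -E (H u v) | rewrite -E' (H' u v)].
Qed.

Lemma edge_detM l f1 f1' f2 f2' : edge_det l f1 f1' -> edge_det l f2 f2' ->
  edge_det l (fun u v => f1 u v * f2 u v) (fun u v => f1' u v * f2' u v).
Proof.
case=> g1 [H1 H1'] [g2 [H2 H2']]; exists (fun c => g1 c * g2 c).
by split=> u v huv; [rewrite H1 ?H2 | rewrite H1' ?H2'].
Qed.

Lemma vertex_detM l a1 a1' a2 a2' : vertex_det l a1 a1' -> vertex_det l a2 a2' ->
  vertex_det l (fun u => a1 u * a2 u) (fun u => a1' u * a2' u).
Proof.
case=> g1 [H1 H1'] [g2 [H2 H2']]; exists (fun c => g1 c * g2 c).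
by split=> u v huv; [rewrite (H1 u v) ?(H2 u v) | rewrite (H1' u v) ?(H2' u v)].
Qed.

Lemma edge_det_vertex l a a' :
  vertex_det l a a' -> edge_det l (fun u _ => a u) (fun u _ => a' u).
Proof. by case=> g [H H']; exists g; split=> u v huv; [rewrite (H u v) | rewrite (H' u v)]. Qed.

Lemma vertex_det_cst l c : vertex_det l (fun _ => c) (fun _ => c).
Proof. by exists (fun _ => c). Qed.

Lemma edge_det_swap l f f' : symmetric e -> symmetric e' ->
  edge_det l f f' -> edge_det l (fun u v => f v u) (fun u v => f' v u).
Proof.
move=> sE sE' [g [H H']]; exists (fun c => g (color_swap c)).
by split=> u v huv; rewrite -eb_swap; [rewrite H // sE | rewrite H' // sE'].
Qed.

Lemma vertex_det_sum_nb l f f' : edge_det l f f' ->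
  vertex_det l.+1 (fun u => \sum_(x | e u x) f u x) (fun u => \sum_(x | e' u x) f' u x).
Proof.
case=> g [H H']; exists (fun c : colorT_succ l => \sum_(c' <- c.1.1.2) g c').
split=> u v _ /=; rewrite sum_seq_mset big_map big_filter [RHS]big_enum_cond /=;
  apply: eq_bigr => x; [exact: H | exact: H'].
Qed.

Lemma edge_det_sum_common_nb l f1 f1' f2 f2' : edge_det l f1 f1' -> edge_det l f2 f2' ->
  edge_det l.+1 (fun u v => \sum_(x | e u x && e v x) f1 u x * f2 v x)
                (fun u v => \sum_(x | e' u x && e' v x) f1' u x * f2' v x).
Proof.
case=> g1 [H1 H1'] [g2 [H2 H2']].
exists (fun c : colorT_succ l => \sum_(p <- c.1.2) g1 p.1 * g2 p.2).
split=> u v _ /=; rewrite sum_seq_mset big_map big_filter [RHS]big_enum_cond /=;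
  apply: eq_bigr => x /andP[ux vx]; [by rewrite H1 ?H2 | by rewrite H1' ?H2'].
Qed.

Lemma vertex_det_sum l a a' :
  no_isolated e -> no_isolated e' -> #|V| = #|V'| ->
  (forall l, eb_graph e l = eb_graph e' l) ->
  vertex_det l a a' -> \sum_u a u = \sum_u a' u.
Proof.
move=> nE nE' eqV eqG [g [H H']].
rewrite (sum_by_deg _ nE) (sum_by_deg _ nE') eqV; apply: eq_bigr => d d_gt0.
(* Summing over the edges counts u exactly deg u times, and deg u is visible at level l.+1. *)
pose gd (c : colorT_succ l) := (size c.1.1.2 == d) * g c.1.1.1.
have edge_sum (W : finType) (r : rel W) (b : W -> nat) :
    (forall u v, r u v -> b u = g (eb r l u v)) ->
    \sum_(p : W * W | r p.1 p.2) gd (eb r l.+1 p.1 p.2) = d * \sum_(u | deg r u == d) b u.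
  move=> Hb; rewrite -sum_edges_deg big_mkcondr /=; apply: eq_bigr => [[u v]] /= ruv.
  by rewrite /gd size_eb_nb -(Hb u v ruv); case: (_ == _); rewrite ?mul1n.
apply/eqP; rewrite -(eqn_pmul2l d_gt0) -(edge_sum _ _ _ H) -(edge_sum _ _ _ H').
by rewrite !eb_graph_sum eqG.
Qed.

End ColorDetermined.

(** * Weighted homomorphism counts and vertex elimination *)

Section WeightedHom.
Variables (VF V : finType) (eF : rel VF).
Implicit Types (S : {set VF}) (h : {ffun VF -> V}) (w a b : VF) (y : V).

Definition ffun_upd h w y : {ffun VF -> V} := [ffun x => if x == w then y else h x].

Lemma ffun_upd_id h w y : (ffun_upd h w y == h) = (h w == y).
Proof.
apply/eqP/eqP => [<-|hw]; first by rewrite ffunE eqxx.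
by apply/ffunP => x; rewrite ffunE; case: eqP => // ->.
Qed.

Lemma ffun_updK h w y z : ffun_upd (ffun_upd h w z) w y = ffun_upd h w y.
Proof. by apply/ffunP => x; rewrite !ffunE; case: eqP. Qed.

Lemma ffun_upd_at h w y : ffun_upd h w y w = y.
Proof. by rewrite ffunE eqxx. Qed.

Lemma sum_ffun_fiber w (F : {ffun VF -> V} -> nat) :
  (forall h y, F (ffun_upd h w y) = F h) ->
  forall y, \sum_h F h = #|V| * \sum_(h : {ffun VF -> V} | h w == y) F h.
Proof.
move=> Fw y.
have fiberE z :
    \sum_(h : {ffun VF -> V} | h w == z) F h = \sum_(h : {ffun VF -> V} | h w == y) F h.
  rewrite (reindex_onto (fun h => ffun_upd h w z) (fun h => ffun_upd h w y)) /=; last first.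
    by move=> h /eqP hz; rewrite ffun_updK; apply/eqP; rewrite ffun_upd_id hz.
  apply: eq_big => [h|h _]; last by rewrite Fw.
  by rewrite ffun_upd_at eqxx ffun_updK ffun_upd_id.
rewrite (partition_big (fun h : {ffun VF -> V} => h w) xpredT) //=.
by rewrite (eq_bigr _ (fun z _ => fiberE z)) sum_nat_const.
Qed.

Lemma sum_ffun_elim w (R : {ffun VF -> V} -> nat) (phi : {ffun VF -> V} -> V -> nat) :
  (forall h y, R (ffun_upd h w y) = R h) ->
  (forall h y x, phi (ffun_upd h w y) x = phi h x) ->
  #|V| * \sum_h R h * phi h (h w) = \sum_h R h * \sum_x phi h x.
Proof.
move=> Rw phiw.
under [RHS]eq_bigr do rewrite big_distrr.
rewrite exchange_big /=.
rewrite (eq_bigr (fun x => #|V| * \sum_(h : {ffun VF -> V} | h w == x) R h * phi h x))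
  => [|x _]; last by apply: sum_ffun_fiber => h y; rewrite Rw phiw.
rewrite -big_distrr /= (partition_big (fun h : {ffun VF -> V} => h w) xpredT) //=.
congr (_ * _).
by apply: eq_bigr => x _; apply: eq_bigr => h /eqP ->.
Qed.

Hypotheses (symF : symmetric eF) (irrF : irreflexive eF).

Definition hom_weight S (al : VF -> V -> nat) (be : VF -> VF -> V -> V -> nat) h :=
  \prod_(a in S) al a (h a) * \prod_(a in S) \prod_(b in S | eF a b) be a b (h a) (h b).

(* Vertices outside S are unconstrained and each contributes a factor #|V|. *)
Definition weighted_hom S al be := \sum_h hom_weight S al be h.

Lemma hom_weight_upd_notin S al be w h y :
  w \notin S -> hom_weight S al be (ffun_upd h w y) = hom_weight S al be h.
Proof.
move=> wS; have updE a : a \in S -> ffun_upd h w y a = h a.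
  by move=> aS; rewrite ffunE; case: eqP => // aw; rewrite -aw aS in wS.
rewrite /hom_weight; congr (_ * _).
  by apply: eq_bigr => a aS; rewrite updE.
by apply: eq_bigr => a aS; apply: eq_bigr => b /andP[bS _]; rewrite !updE.
Qed.

Lemma hom_weightD1 S al be w h : w \in S ->
  hom_weight S al be h = hom_weight (S :\ w) al be h *
    (al w (h w) * \prod_(b in nb_in eF S w) (be w b (h w) (h b) * be b w (h b) (h w))).
Proof.
move=> wS; rewrite /hom_weight (bigD1 w) //= (bigD1 w wS) /=.
have inD1 (F : VF -> nat) : \prod_(a in S | a != w) F a = \prod_(a in S :\ w) F a.
  by apply: eq_bigl => a; rewrite in_setD1 andbC.
rewrite !inD1.
have -> : \prod_(b in S | eF w b) be w b (h w) (h b) =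
          \prod_(b in nb_in eF S w) be w b (h w) (h b).
  by apply: eq_bigl => b; rewrite inE.
have -> : \prod_(a in S :\ w) \prod_(b in S | eF a b) be a b (h a) (h b) =
    \prod_(a in S :\ w) ((if eF a w then be a w (h a) (h w) else 1) *
                        \prod_(b in S :\ w | eF a b) be a b (h a) (h b)).
  apply: eq_bigr => a /setD1P[aw aS].
  case: ifPn => [aFw|naFw].
    rewrite (bigD1 w) ?wS ?aFw //=; congr (_ * _).
    by apply: eq_bigl => b; rewrite in_setD1 andbC andbA.
  rewrite mul1n; apply: eq_bigl => b; rewrite in_setD1.
  by case: eqP => // ->; rewrite (negbTE naFw) andbF.
rewrite big_split /=.
have -> : \prod_(a in S :\ w) (if eF a w then be a w (h a) (h w) else 1) =
          \prod_(b in nb_in eF S w) be b w (h b) (h w).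
  rewrite big_mkcond [RHS]big_mkcond; apply: eq_bigr => a _.
  rewrite !inE (symF w a); case: eqP => [->|_] /=; last by case: (a \in S); case: (eF a w).
  by rewrite irrF andbF; case: (w \in S).
rewrite big_split /=.
by ring.
Qed.

Definition scale_vweight (al : VF -> V -> nat) a (D : V -> nat) : VF -> V -> nat :=
  fun c => if c == a then fun y => al c y * D y else al c.

Definition scale_eweight (be : VF -> VF -> V -> V -> nat) a b (D : V -> V -> nat) :=
  fun c d => if (c == a) && (d == b) then fun y z => be c d y z * D y z else be c d.

Lemma hom_weight_scale_v S al be a D h : a \in S ->
  hom_weight S (scale_vweight al a D) be h = hom_weight S al be h * D (h a).
Proof.
move=> aS; rewrite /hom_weight (bigD1 a) //= [in RHS](bigD1 a) //= {1}/scale_vweight eqxx.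
rewrite (eq_bigr (fun c => al c (h c))) => [|c /andP[_ /negbTE]]; last first.
  by rewrite /scale_vweight => ->.
by ring.
Qed.

Lemma hom_weight_scale_e S al be a b D h : a \in S -> b \in S -> eF a b ->
  hom_weight S al (scale_eweight be a b D) h = hom_weight S al be h * D (h a) (h b).
Proof.
move=> aS bS ab; rewrite /hom_weight -mulnA; congr (_ * _).
rewrite (bigD1 a) //= [in RHS](bigD1 a) //=.
rewrite (bigD1 b) ?bS ?ab //= [in RHS](bigD1 b) ?bS ?ab //= {1}/scale_eweight !eqxx /=.
rewrite (eq_bigr (fun d => be a d (h a) (h d))) => [|d /andP[_ /negbTE]]; last first.
  by rewrite /scale_eweight eqxx => ->.
rewrite [X in _ * X = _](eq_bigr (fun c => \prod_(d in S | eF c d) be c d (h c) (h d)))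
  => [|c /andP[_ /negbTE ca]]; last by apply: eq_bigr => d _; rewrite /scale_eweight ca.
by ring.
Qed.

Lemma weighted_hom_elim S al be w : w \in S ->
  #|V| * weighted_hom S al be = \sum_h hom_weight (S :\ w) al be h *
     \sum_x (al w x * \prod_(b in nb_in eF S w) (be w b x (h b) * be b w (h b) x)).
Proof.
move=> wS; rewrite /weighted_hom (eq_bigr _ (fun h _ => hom_weightD1 al be h wS)).
apply: (@sum_ffun_elim w (fun h => hom_weight (S :\ w) al be h)
  (fun h x => al w x * \prod_(b in nb_in eF S w) (be w b x (h b) * be b w (h b) x))).
  by move=> h y; rewrite hom_weight_upd_notin // setD11.
move=> h y x; congr (_ * _); apply: eq_bigr => b /(nb_in_D1 irrF) /setD1P[bw _].
by rewrite !ffunE (negbTE bw).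
Qed.

Lemma weighted_hom_elim_deg0 S al be w : w \in S -> nb_in eF S w = set0 ->
  #|V| * weighted_hom S al be = weighted_hom (S :\ w) al be * \sum_x al w x.
Proof.
move=> wS N0; rewrite (weighted_hom_elim al be wS) N0 /weighted_hom big_distrl /=.
by apply: eq_bigr => h _; congr (_ * _); apply: eq_bigr => x _; rewrite big_set0 muln1.
Qed.

Lemma weighted_hom_elim_deg1 S al be w a : w \in S -> nb_in eF S w = [set a] ->
  #|V| * weighted_hom S al be =
  weighted_hom (S :\ w)
    (scale_vweight al a (fun y => \sum_x al w x * (be w a x y * be a w y x))) be.
Proof.
move=> wS N1; rewrite (weighted_hom_elim al be wS) N1 /weighted_hom.
have aSw : a \in S :\ w by apply: (nb_in_D1 irrF); rewrite N1 set11.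
apply: eq_bigr => h _; rewrite hom_weight_scale_v //; congr (_ * _).
by apply: eq_bigr => x _; rewrite big_set1.
Qed.

Lemma weighted_hom_elim_deg2 S al be w a b : w \in S -> a != b -> eF a b ->
  nb_in eF S w = [set a; b] ->
  #|V| * weighted_hom S al be = weighted_hom (S :\ w) al (scale_eweight be a b (fun y z =>
    \sum_x al w x * ((be w a x y * be a w y x) * (be w b x z * be b w z x)))).
Proof.
move=> wS ab eab N2; rewrite (weighted_hom_elim al be wS) N2 /weighted_hom.
have inSw c : c \in [set a; b] -> c \in S :\ w by rewrite -N2; apply: nb_in_D1.
apply: eq_bigr => h _; rewrite hom_weight_scale_e ?inSw ?set21 ?set22 //; congr (_ * _).
by apply: eq_bigr => x _; rewrite big_setU1 ?big_set1 ?inE.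
Qed.

Lemma weighted_hom_set0 al be : weighted_hom set0 al be = #|V| ^ #|VF|.
Proof.
rewrite /weighted_hom /hom_weight (eq_bigr (fun _ => 1)) => [|h _]; last by rewrite !big_set0.
by rewrite sum1_card card_ffun.
Qed.

Lemma weighted_hom_card0 S al be w : #|V| = 0 -> w \in S -> weighted_hom S al be = 0.
Proof. by move=> V0 wS; rewrite /weighted_hom big1 // => h _; have := card0_eq V0 (h w). Qed.

End WeightedHom.

Lemma prod_nat_bool (I : finType) (P B : pred I) :
  \prod_(i | P i) (B i : nat) = [forall i, P i ==> B i].
Proof.
case: (boolP [forall i, P i ==> B i]) => [/forall_inP allB | ].
  by apply: big1 => i /allB ->.
by rewrite negb_forall_in => /exists_inP[i Pi /negbTE Bi]; rewrite (bigD1 i) //= Bi.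
Qed.

Lemma hom_count_weighted_hom (VF V : finType) (eF : rel VF) (e : rel V) :
  hom_count eF e = weighted_hom eF setT (fun _ _ => 1) (fun _ _ x y => e x y).
Proof.
rewrite /hom_count /weighted_hom -sum1dep_card big_mkcond /=; apply: eq_bigr => h _.
rewrite /hom_weight big1 // mul1n.
rewrite (eq_bigr (fun a => ([forall b, eF a b ==> e (h a) (h b)] : nat))) => [|a _].
  by rewrite (eq_bigl xpredT) ?prod_nat_bool // => a; rewrite inE.
by rewrite (eq_bigl (eF a)) ?prod_nat_bool // => b; rewrite inE.
Qed.

Section EliminationInvariant.
Variables (V V' : finType) (e : rel V) (e' : rel V') (VF : finType) (eF : rel VF).
Hypotheses (symF : symmetric eF) (irrF : irreflexive eF).
Hypotheses (symE : symmetric e) (symE' : symmetric e').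

(* Edge weights vanish off the edges of G and G', so that a sum over all vertices of G is a sum
   over neighbours, which is what the colours see. *)
Definition eb_det_weights (S : {set VF}) l (al : VF -> V -> nat) (al' : VF -> V' -> nat)
    (be : VF -> VF -> V -> V -> nat) (be' : VF -> VF -> V' -> V' -> nat) :=
  [/\ forall a, a \in S -> vertex_det e e' l (al a) (al' a),
      forall a b, a \in S -> b \in S -> eF a b -> edge_det e e' l (be a b) (be' a b),
      forall a b x y, ~~ e x y -> be a b x y = 0 &
      forall a b x y, ~~ e' x y -> be' a b x y = 0].

Lemma eb_det_weightsD1 S l al al' be be' w :
  eb_det_weights S l al al' be be' -> eb_det_weights (S :\ w) l al al' be be'.
Proof.
case=> Hal Hbe He He'; split=> // [a | a b] /setD1P[_ aS]; first exact: Hal.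
by move=> /setD1P[_ bS]; apply: Hbe.
Qed.

Lemma eb_det_weights_succ S l al al' be be' :
  eb_det_weights S l al al' be be' -> eb_det_weights S l.+1 al al' be be'.
Proof.
case=> Hal Hbe He He'; split=> // [a aS | a b aS bS ab].
  exact/vertex_det_succ/Hal.
exact/edge_det_succ/Hbe.
Qed.

Lemma edge_det_pendant S l al al' be be' w a :
  eb_det_weights S l al al' be be' -> w \in S -> a \in S -> eF w a ->
  edge_det e e' l (fun y x => al w x * (be w a x y * be a w y x))
                  (fun y x => al' w x * (be' w a x y * be' a w y x)).
Proof.
case=> Hal Hbe _ _ wS aS wa; have aw : eF a w by rewrite symF.
apply: edge_detM; first exact/edge_det_swap/edge_det_vertex/Hal.
by apply: edge_detM; [apply/edge_det_swap/Hbe | apply: Hbe].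
Qed.

Lemma eb_det_weights_deg1 S l al al' be be' w a :
  eb_det_weights S l al al' be be' -> w \in S -> nb_in eF S w = [set a] ->
  eb_det_weights (S :\ w) l.+1
    (scale_vweight al a (fun y => \sum_x al w x * (be w a x y * be a w y x)))
    (scale_vweight al' a (fun y => \sum_x al' w x * (be' w a x y * be' a w y x))) be be'.
Proof.
move=> Hw wS N1; have aN : a \in nb_in eF S w by rewrite N1 set11.
have aSw := nb_in_D1 irrF aN; have /setD1P[_ aS] := aSw.
move: aN; rewrite inE => /andP[_ wa].
have [Hal Hbe He He'] := eb_det_weightsD1 w (eb_det_weights_succ Hw).
split=> // c cS; rewrite /scale_vweight; have [->|_] := eqVneq c a; last exact: Hal.
apply: vertex_detM (Hal _ aSw) _.
apply: eq_vertex_det (vertex_det_sum_nb (edge_det_pendant Hw wS aS wa)) => y;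
  rewrite big_rmcond // => x; [move=> /He -> | move=> /He' ->]; by rewrite !muln0.
Qed.

Lemma eb_det_weights_deg2 S l al al' be be' w a b :
  eb_det_weights S l al al' be be' -> w \in S -> eF a b -> nb_in eF S w = [set a; b] ->
  eb_det_weights (S :\ w) l.+1 al al'
    (scale_eweight be a b (fun y z => \sum_x al w x *
       ((be w a x y * be a w y x) * (be w b x z * be b w z x))))
    (scale_eweight be' a b (fun y z => \sum_x al' w x *
       ((be' w a x y * be' a w y x) * (be' w b x z * be' b w z x)))).
Proof.
move=> Hw wS ab N2.
have [aN bN] : a \in nb_in eF S w /\ b \in nb_in eF S w by rewrite N2 set21 set22.
have aSw := nb_in_D1 irrF aN; have bSw := nb_in_D1 irrF bN.
have /setD1P[_ aS] := aSw; have /setD1P[_ bS] := bSw.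
move: aN bN; rewrite !inE => /andP[_ wa] /andP[_ wb]; have bw : eF b w by rewrite symF.
have [Hal Hbe He He'] := eb_det_weightsD1 w (eb_det_weights_succ Hw).
split=> //; last 2 first.
- by move=> c d x y nxy; rewrite /scale_eweight; case: ifP; rewrite He.
- by move=> c d x y nxy; rewrite /scale_eweight; case: ifP; rewrite He'.
move=> c d cS dS cd; rewrite /scale_eweight.
case: ifP => [/andP[/eqP-> /eqP->] | _]; last exact: Hbe.
apply: edge_detM (Hbe _ _ aSw bSw ab) _.
have Hwb : edge_det e e' l (fun z x => be w b x z * be b w z x)
                           (fun z x => be' w b x z * be' b w z x).
  by case: Hw => _ Hbe0 _ _; apply: edge_detM; [apply/edge_det_swap/Hbe0 | apply: Hbe0].
apply: eq_edge_det (edge_det_sum_common_nb (edge_det_pendant Hw wS aS wa) Hwb) => y z _;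
  (rewrite big_rmcond; first by apply: eq_bigr => x _; rewrite !mulnA);
  [move=> x /nandP[/He|/He] -> | move=> x /nandP[/He'|/He'] ->]; by rewrite ?(muln0, mul0n).
Qed.
End EliminationInvariant.

Section WeightedHomEq.
Variables (V V' : finType) (e : rel V) (e' : rel V') (VF : finType) (eF : rel VF).
Hypotheses (symF : symmetric eF) (irrF : irreflexive eF).
Hypothesis small_simplicial : forall S : {set VF}, S != set0 ->
  exists2 w, w \in S & #|nb_in eF S w| <= 2 /\ clique eF (nb_in eF S w).
Hypotheses (symE : symmetric e) (symE' : symmetric e').
Hypotheses (nE : no_isolated e) (nE' : no_isolated e').
Hypotheses (eqV : #|V| = #|V'|) (eqG : forall l, eb_graph e l = eb_graph e' l).

Lemma weighted_hom_eq S l al al' be be' :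
  eb_det_weights e e' eF S l al al' be be' ->
  weighted_hom eF S al be = weighted_hom eF S al' be'.
Proof.
have [n] := ubnP #|S|; elim: n => // n IH in S l al al' be be' *; rewrite ltnS => Sn Hw.
have [->|S0] := eqVneq S set0; first by rewrite !weighted_hom_set0 eqV.
have [w wS [Nw Ncl]] := small_simplicial S0.
have [V0|V_gt0] := posnP #|V|.
  by rewrite !(weighted_hom_card0 _ _ _ _ wS) // -eqV.
have {}IH := IH (S :\ w); have /IH {}IH : #|S :\ w| < n.
  by move: Sn; rewrite (cardsD1 w S) wS.
apply/eqP; rewrite -(eqn_pmul2l V_gt0) {2}eqV; apply/eqP.
have [/cards0_eq N0 | N_gt0] := posnP #|nb_in eF S w|.
  rewrite !(weighted_hom_elim_deg0 symF irrF _ _ wS N0).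
  rewrite (IH _ _ _ _ _ (eb_det_weightsD1 w Hw)).
  by case: Hw => /(_ w wS) Hal _ _ _; rewrite (vertex_det_sum nE nE' eqV eqG Hal).
have [/cards1P[a N1] | /cards2P[a [b [ab N2]]]] : #|nb_in eF S w| == 1 \/ #|nb_in eF S w| == 2.
  by move: Nw N_gt0; case: #|_| => [|[|[|]]] //; auto.
  rewrite !(weighted_hom_elim_deg1 symF irrF _ _ wS N1).
  exact: IH (eb_det_weights_deg1 symF irrF symE symE' Hw wS N1).
have eab : eF a b by apply: Ncl; rewrite ?N2 ?set21 ?set22.
rewrite !(weighted_hom_elim_deg2 symF irrF _ _ wS ab eab N2).
exact: IH (eb_det_weights_deg2 symF irrF symE symE' Hw wS eab N2).
Qed.

End WeightedHomEq.

(** * Graphs of bounded treewidth are degenerate *)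

Lemma connect_first_step (T : finType) (r : rel T) x y :
  x != y -> connect r x y -> exists z, r x z.
Proof.
move=> xy /connectP[[|z p] /= pth E]; first by rewrite E eqxx in xy.
by exists z; case/andP: pth.
Qed.

Lemma connect_avoid (T : finType) (r : rel T) l j x y :
  (forall z, r l z -> z = j) -> (forall z, r z l -> z = j) ->
  x != l -> y != l -> connect r x y ->
  connect [rel a b | [&& r a b, a != l & b != l]] x y.
Proof.
move=> out_l in_l xl yl /connectP[p pth yE]; subst y.
case/shortenP: pth yl => p' pth' uq _ yl; apply/connectP; exists p' => //.
suff lp' : l \notin p'.
  elim: p' x xl pth' lp' {uq yl} => [//|z q IH] x xl /= /andP[rxz pth].
  by rewrite inE negb_or => /andP[zl lq]; rewrite rxz xl eq_sym zl /= IH // eq_sym.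
apply/negP => lp; move: pth' uq yl; case/splitPr: lp => p1 p2.
rewrite cat_path last_cat /= => /and3P[_ rl pth2].
case: p2 pth2 => [|z p2] /=; first by rewrite eqxx.
case/andP=> /out_l zj _ uq _; subst z.
have : uniq ((x :: p1) ++ (l :: j :: p2)) by exact: uq.
rewrite cat_uniq => /and3P[_ /hasPn H _].
have /negP[] : j \notin x :: p1 by apply: H; rewrite !inE eqxx orbT.
by rewrite -(in_l _ rl) mem_last.
Qed.

Section BoundedTreewidth.
Variables (VF : finType) (eF : rel VF) (T : finType) (t : rel T) (B : T -> {set VF}).
Hypotheses (symt : symmetric t) (irrt : irreflexive t) (irrF : irreflexive eF).
Implicit Types (U : {set T}) (S : {set VF}).

Definition bag_rel U v :=
  [rel x y | [&& x \in U, y \in U, t x y, v \in B x & v \in B y]].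

Definition subtree U :=
  (forall x y, x \in U -> y \in U -> connect (induced t U) x y) /\
  \sum_(i in U) #|nb_in t U i| = 2 * (#|U| - 1).

Definition decomposes U S :=
  [/\ forall v, v \in S -> exists2 i, i \in U & v \in B i,
      forall u v, u \in S -> v \in S -> eF u v ->
        exists2 i, i \in U & (u \in B i) && (v \in B i) &
      forall v i j, v \in S -> i \in U -> j \in U -> v \in B i -> v \in B j ->
        connect (bag_rel U v) i j].

Lemma subtree_leaf U : subtree U -> 1 < #|U| -> exists2 l, l \in U & #|nb_in t U l| = 1.
Proof.
move=> [con sumE] U_gt1.
have [/exists_inP[l lU /eqP]|] := boolP [exists l in U, #|nb_in t U l| == 1]; first by exists l.
rewrite negb_exists_in => /forall_inP not_leaf.
suff : \sum_(i in U) 2 <= \sum_(i in U) #|nb_in t U i| by rewrite sum_nat_const sumE; lia.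
apply: leq_sum => i iU.
have [k kU ik] : exists2 k, k \in U & i != k.
  have [a [b [aU bU ab]]] := card_gt1P U_gt1.
  by have [ia|ia] := eqVneq i a; [exists b; rewrite ?ia | exists a].
have [z /and3P[_ zU tz]] := connect_first_step ik (con _ _ iU kU).
have : 0 < #|nb_in t U i| by apply/card_gt0P; exists z; rewrite inE zU tz.
by have := not_leaf i iU; lia.
Qed.

Section Leaf.
Variables (U : {set T}) (l j : T).
Hypotheses (lU : l \in U) (leaf_l : nb_in t U l = [set j]).

Lemma leaf_nbP z : z \in U -> t l z = (z == j).
Proof. by move=> zU; rewrite -in_set1 -leaf_l inE zU. Qed.

Lemma leaf_nb_in : [/\ j \in U, t l j & j != l].
Proof.
have : j \in nb_in t U l by rewrite leaf_l set11.
rewrite inE => /andP[jU tlj]; split=> //.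
by apply: contraTneq tlj => ->; rewrite irrt.
Qed.

Lemma connect_leafD1 (r : rel T) x y :
  subrel r (induced t U) -> x != l -> y != l -> connect r x y ->
  connect [rel a b | [&& r a b, a != l & b != l]] x y.
Proof.
move=> rU; apply: (connect_avoid (j := j)) => z /rU /and3P[zU' zU tz]; apply/eqP.
  by rewrite -(leaf_nbP zU).
by rewrite -(leaf_nbP zU') symt.
Qed.

Lemma subtreeD1 : subtree U -> subtree (U :\ l).
Proof.
have [jU tlj jl] := leaf_nb_in.
case=> con sumE; split=> [x y /setD1P[xl xU] /setD1P[yl yU] | ].
  apply: connect_sub (connect_leafD1 (fun _ _ r => r) xl yl (con x y xU yU)) => a b.
  case/and3P=> /and3P[aU bU tab] al bl.
  by apply: connect1; rewrite /= !in_setD1 al bl aU bU.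
have degD1 i : i \in U :\ l -> #|nb_in t U i| = #|nb_in t (U :\ l) i| + t i l.
  move=> _; rewrite (cardsD1 l (nb_in t U i)) inE lU /= addnC.
  by congr (_ + _); apply: eq_card => k; rewrite !inE andbA.
have sum_tl : \sum_(i in U :\ l) (t i l : nat) = 1.
  rewrite (bigD1 j) ?in_setD1 ?jl //= -symt tlj big1 // => i /andP[/setD1P[il iU] ij].
  by rewrite symt leaf_nbP // (negbTE ij).
move: sumE; rewrite (bigD1 l) //= leaf_l cards1.
rewrite (eq_bigl (fun i => i \in U :\ l)) => [|i]; last by rewrite in_setD1 andbC.
rewrite (eq_bigr _ degD1) big_split /= sum_tl (cardsD1 l U) lU.
lia.
Qed.

Lemma decomposesD1 S :
  (forall v, v \in S -> v \in B l -> v \in B j) -> decomposes U S -> decomposes (U :\ l) S.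
Proof.
have [jU _ jl] := leaf_nb_in; have jUl : j \in U :\ l by rewrite in_setD1 jl jU.
move=> BlBj [cov ecov con]; split.
- move=> v vS; have [i iU vi] := cov v vS.
  have [il|il] := eqVneq i l; first by exists j => //; rewrite BlBj // -il.
  by exists i; rewrite ?in_setD1 ?il.
- move=> u v uS vS uv; have [i iU /andP[ui vi]] := ecov u v uS vS uv.
  have [il|il] := eqVneq i l; first by exists j; rewrite // !BlBj // -il.
  by exists i; rewrite ?in_setD1 ?il ?ui.
- move=> v i k vS /setD1P[il iU] /setD1P[kl kU] vi vk.
  have sub : subrel (bag_rel U v) (induced t U).
    by move=> a b /and5P[aU bU tab _ _]; rewrite /= aU bU tab.
  apply: connect_sub (connect_leafD1 sub il kl (con v i k vS iU kU vi vk)) => a b.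
  case/and3P=> /and5P[aU bU tab va vb] al bl.
  by apply: connect1; rewrite /= !in_setD1 al bl aU bU tab va vb.
Qed.

End Leaf.

Variable k : nat.
Hypothesis bag_size : forall i, #|B i| <= k.+1.

Lemma nb_in_bag S v i : v \in B i -> {subset nb_in eF S v <= B i} -> #|nb_in eF S v| <= k.
Proof.
move=> vi nbB; have : nb_in eF S v \subset B i :\ v.
  apply/subsetP => u uN; rewrite in_setD1 nbB // andbT.
  by move: uN; rewrite inE => /andP[_]; apply: contraTneq => ->; rewrite irrF.
by move/subset_leq_card; have := bag_size i; rewrite (cardsD1 v (B i)) vi; lia.
Qed.

Lemma subtree_degenerate U S : U != set0 -> subtree U -> decomposes U S -> S != set0 ->
  exists2 v, v \in S & #|nb_in eF S v| <= k.
Proof.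
(* A vertex in a leaf bag but not in the adjacent bag has all its neighbours in the leaf bag;
   if there is no such vertex, the leaf can be removed. *)
have [n] := ubnP #|U|; elim: n => // n IH in U *; rewrite ltnS => Un U0 tU dU S0.
have [cov ecov con] := dU.
have [U_le1 | U_gt1] := leqP #|U| 1.
  have /cards1P[i Ui] : #|U| == 1 by move: U0; rewrite -card_gt0; lia.
  have [v vS] := set0Pn _ S0; exists v => //.
  have [i' + vi] := cov v vS; rewrite Ui inE => /eqP ii; subst i'.
  apply: (nb_in_bag vi) => u; rewrite inE => /andP[uS vu].
  by have [i' + /andP[_ ui]] := ecov v u vS uS vu; rewrite Ui inE => /eqP <-.
have [l lU /eqP/cards1P[j leaf_l]] := subtree_leaf tU U_gt1.
have [jU _ jl] := leaf_nb_in leaf_l.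
have [/exists_inP[v vS /andP[vl vj]] | ] :=
  boolP [exists v in S, (v \in B l) && (v \notin B j)].
  exists v => //; apply: (nb_in_bag vl) => u; rewrite inE => /andP[uS vu].
  have [i iU /andP[vi ui]] := ecov v u vS uS vu.
  have [-> // | li] := eqVneq l i.
  have [z /and5P[_ zU tz _ vz]] := connect_first_step li (con v l i vS lU iU vl vi).
  by move: tz vz; rewrite (leaf_nbP leaf_l zU) => /eqP ->; rewrite (negbTE vj).
rewrite negb_exists_in => /forall_inP BlBj.
apply: (IH (U :\ l)) => //.
- by move: Un; rewrite (cardsD1 l U) lU.
- by apply/set0Pn; exists j; rewrite in_setD1 jl.
- exact: subtreeD1 lU leaf_l tU.
- apply: (decomposesD1 leaf_l) dU => v vS vl.
  by have := BlBj v vS; rewrite vl negbK.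
Qed.

End BoundedTreewidth.

Lemma treewidth_degenerate (VF : finType) (eF : rel VF) k :
  irreflexive eF -> treewidth_le eF k ->
  forall S : {set VF}, S != set0 -> exists2 v, v \in S & #|nb_in eF S v| <= k.
Proof.
move=> irrF [T [t [B [[[T_gt0 [symt irrt] con ecount] cov ecov vcon] bag_size]]]] S S0.
apply: (subtree_degenerate symt irrt irrF bag_size (U := setT)) => //.
- by rewrite -card_gt0 cardsT.
- split=> [x y _ _ | ].
    apply: connect_sub (con x y) => a b tab.
    by apply: connect1; rewrite /= !inE tab.
  rewrite cardsT -ecount -sum1dep_card.
  rewrite -(pair_big_dep xpredT (fun i j => t i j) (fun _ _ => 1)) /=.
  apply: eq_big => [i|i _]; first by rewrite inE.
  by rewrite sum1dep_card; apply: eq_card => j; rewrite !inE.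
- split.
  + by move=> v _; have [i vi] := cov v; exists i; rewrite ?inE.
  + by move=> u v _ _ uv; have [i ui] := ecov u v uv; exists i; rewrite ?inE.
  + move=> v i j _ _ _ vi vj; apply: connect_sub (vcon v i j vi vj).
    by move=> a b /and3P[tab va vb]; apply: connect1; rewrite /= !inE tab va vb.
Qed.

(** * Chordal graphs of treewidth two have simplicial vertices of degree at most two *)

Section ShortestPath.
Variables (T : finType) (r : rel T).
Implicit Types (x : T) (p : seq T).

Lemma last_take x p i : i <= size p -> last x (take i p) = nth x (x :: p) i.
Proof.
by move=> ip; rewrite (last_nth x) size_takel // -/(take i.+1 (x :: p)) nth_take.
Qed.

Lemma drop_path x p j : j <= size p -> path r x p -> path r (nth x (x :: p) j) (drop j p).
Proof.
by move=> jp; rewrite -{1}(cat_take_drop j p) cat_path last_take // => /andP[].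
Qed.

Lemma path_shortcut x p i j : i <= j <= size p ->
  path r x p -> path r (nth x (x :: p) i) (drop j p) ->
  [/\ path r x (take i p ++ drop j p),
      last x (take i p ++ drop j p) = last (nth x (x :: p) i) (drop j p) &
      size (take i p ++ drop j p) = i + (size p - j)].
Proof.
move=> /andP[ij jp] pth pj; have ip := leq_trans ij jp.
rewrite cat_path last_cat last_take // take_path // pj size_cat size_takel // size_drop.
by split.
Qed.

Lemma last_drop x p j : j <= size p -> last (nth x (x :: p) j) (drop j p) = last x p.
Proof. by move=> jp; rewrite -last_take // -last_cat cat_take_drop. Qed.

Lemma shortest_path_induced a b : connect r a b ->
  exists m (q : nat -> T), [/\ q 0 = a, q m = b,
    forall i, i < m -> r (q i) (q i.+1),
    forall i j, i < j <= m -> q i != q j &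
    forall i j, i.+1 < j <= m -> ~~ r (q i) (q j)].
Proof.
move=> /connectP[p0 pth0 lst0].
pose P n := [exists p : n.-tuple T, path r a p && (last a p == b)].
have [|m /existsP[[p /= /eqP sz] /andP[pth /eqP lst]] min_m] := ex_minnP (P := P).
  by exists (size p0); apply/existsP; exists (in_tuple p0); rewrite pth0 -lst0 /=.
have min_p p' : path r a p' -> last a p' = b -> m <= size p'.
  by move=> pth' lst'; apply: min_m; apply/existsP; exists (in_tuple p'); rewrite pth' lst' /=.
pose q i := nth a (a :: p) i.
have no_shortcut i j : i <= j <= m -> path r (q i) (drop j p) ->
    last (q i) (drop j p) = b -> m <= i + (m - j).
  rewrite -sz => ijm pj lst'; have [pth' lst_p <-] := path_shortcut ijm pth pj.
  by rewrite {1}sz; apply: min_p pth' (etrans lst_p lst').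
have qm : q m = b by rewrite /q -sz -(last_nth a) lst.
have path_q j : j <= m -> path r (q j) (drop j p) /\ last (q j) (drop j p) = b.
  by rewrite -sz => jm; rewrite drop_path ?last_drop.
exists m, q; split=> //.
- by move=> i im; apply: (pathP a pth); rewrite sz.
- move=> i j /andP[ij jm]; apply/eqP => qij.
  have [pj lj] := path_q j jm; rewrite -qij in pj lj.
  by have := no_shortcut i j; rewrite ltnW //= jm => /(_ isT pj lj); lia.
- move=> i j /andP[ij jm]; apply/negP => rij.
  have dropE : drop j.-1 p = q j :: drop j p.
    by rewrite (drop_nth a) ?sz; [case: j ij {jm rij} | lia].
  have [pj lj] := path_q j jm.
  have ijm : i <= j.-1 <= m by lia.
  by have := no_shortcut i j.-1 ijm; rewrite dropE /= rij pj => /(_ isT lj); lia.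
Qed.

End ShortestPath.

Lemma modSn_small k i : i < k -> i.+1 %% k = if i.+1 == k then 0 else i.+1.
Proof. by move=> ik; case: eqP => [->|ne]; [exact: modnn | apply: modn_small; lia]. Qed.

Section Chordal.
Variables (VF : finType) (eF : rel VF).
Hypotheses (symF : symmetric eF) (irrF : irreflexive eF) (chF : chordal eF).

Lemma chordal_separation S w a b :
  a != b -> eF w a -> eF w b -> ~~ eF a b -> nb_in eF S w \subset [set a; b] ->
  ~~ connect (induced eF (S :\ w)) a b.
Proof.
(* A shortest a-b path avoiding w is induced, and closes up with w to an induced cycle. *)
move=> ab wa wb nab Nw.
apply/negP => /shortest_path_induced[m [q [q0 qm step inj chordless]]].
have m_gt0 : 0 < m by case: m qm {step inj chordless} => // qm; rewrite -qm q0 eqxx in ab.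
have qS i : i <= m -> q i \in S :\ w.
  rewrite leq_eqVlt => /orP[/eqP-> | im]; last by case/and3P: (step i im).
  by move: (step m.-1); rewrite ltn_predL prednK // => /(_ m_gt0) /and3P[].
have m_gt1 : 1 < m.
  suff : m != 1 by lia.
  apply: contraNneq nab => m1; move: (step 0); rewrite m1 => /(_ isT) /and3P[_ _].
  by rewrite q0 -m1 qm.
have indE i j : i <= m -> j <= m -> induced eF (S :\ w) (q i) (q j) = eF (q i) (q j).
  by move=> im jm; rewrite /= !qS.
have qq i j : i <= m -> j <= m -> eF (q i) (q j) = (j == i.+1) || (i == j.+1).
  move=> im jm; apply/idP/orP => [qij | [] /eqP ji]; first last.
  - by rewrite ji symF in im *; case/and3P: (step j im).
  - by rewrite ji in jm *; case/and3P: (step i jm).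
  have [ij|ji|ij] := ltngtP i j; last by rewrite ij irrF in qij.
    by left; apply: contraTT qij => ?; rewrite -indE //; apply: chordless; lia.
  by right; apply: contraTT qij => ?; rewrite symF -indE //; apply: chordless; lia.
have qw j : j <= m -> eF w (q j) = (j == 0) || (j == m).
  move=> jm; apply/idP/idP => [wq | /orP[] /eqP ->]; rewrite ?q0 ?qm //.
  have /setD1P[_ qjS] := qS j jm.
  have : q j \in [set a; b] by apply: (subsetP Nw); rewrite inE qjS.
  rewrite !inE -{1}q0 -qm; apply: contraTT; rewrite negb_or => /andP[j0 jm'].
  by rewrite negb_or eq_sym !inj //; lia.
have qw_neq i : i <= m -> q i != w by move/qS; rewrite in_setD1 => /andP[].
apply: chF; exists m.+2, (fun i : 'I_m.+2 => if val i is i'.+1 then q i' else w); split.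
- by lia.
- move=> [[|i] hi] [[|j] hj] /= qij; apply: val_inj => //=.
  + by move: (qw_neq j); rewrite -qij eqxx; lia.
  + by move: (qw_neq i); rewrite qij eqxx; lia.
  + by move: (inj i j) (inj j i); rewrite qij eqxx; lia.
- move=> [[|i] hi] [[|j] hj] /=; rewrite !modSn_small //.
  + by rewrite qw /=; [case: ifP => ?; lia | lia].
  + by rewrite symF qw /=; [case: ifP => ?; lia | lia].
  + by rewrite qq; [case: ifP => ?; case: ifP => ?; lia | lia | lia].
Qed.

End Chordal.

Section SmallSimplicial.
Variables (VF : finType) (eF : rel VF).
Hypotheses (symF : symmetric eF) (irrF : irreflexive eF) (chF : chordal eF).
Hypothesis degenerate : forall S : {set VF}, S != set0 ->
  exists2 v, v \in S & #|nb_in eF S v| <= 2.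

(* Avoiding a clique Q makes the induction go through: Q cannot meet both sides of a separator. *)
Definition simplicial_outside (S Q : {set VF}) :=
  exists w, [/\ w \in S, w \notin Q, #|nb_in eF S w| <= 2 & clique eF (nb_in eF S w)].

Section InductionStep.
Variables (S Q : {set VF}) (w : VF).
Hypotheses (cQ : clique eF Q) (SQ : ~~ (S \subset Q)).
Hypotheses (wS : w \in S) (wdeg : #|nb_in eF S w| <= 2).
Hypothesis IH : forall S' Q' : {set VF}, #|S'| < #|S| ->
  clique eF Q' -> ~~ (S' \subset Q') -> simplicial_outside S' Q'.

Lemma simplicial_outside_cover : w \in Q ->
  clique eF (nb_in eF S w) -> S :\ w \subset nb_in eF S w -> simplicial_outside S Q.
Proof.
move=> wQ cN cover; have [z zS zQ] := subsetPn SQ.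
have zw : z != w by apply: contraNneq zQ => ->.
have zN : z \in nb_in eF S w by apply: (subsetP cover); rewrite in_setD1 zw zS.
exists z; split=> //.
  have : #|nb_in eF S z| <= #|S :\ z|.
    by apply/subset_leq_card/subsetP => u /(nb_in_D1 irrF).
  have : #|S| <= 1 + #|nb_in eF S w|.
    by rewrite (cardsD1 w S) wS leq_add2l; apply: subset_leq_card.
  by rewrite (cardsD1 z S) zS; lia.
have inN x : x \in S -> x != w -> x \in nb_in eF S w.
  by move=> xS xw; apply: (subsetP cover); rewrite in_setD1 xw xS.
move=> u v uN vN uv; have uS := subsetP (nb_in_sub eF S z) u uN.
have vS := subsetP (nb_in_sub eF S z) v vN.
have [uw|uw] := eqVneq u w.
  by subst u; move: (inN v vS); rewrite inE eq_sym uv => /(_ isT) /andP[].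
have [vw|vw] := eqVneq v w.
  by subst v; move: (inN u uS uw); rewrite inE symF => /andP[].
by apply: cN => //; apply: inN.
Qed.

Lemma simplicial_outside_clique_nb : clique eF (nb_in eF S w) -> simplicial_outside S Q.
Proof.
move=> cN; have [wQ|wQ] := boolP (w \in Q); last by exists w.
have [cover|not_cover] := boolP (S :\ w \subset nb_in eF S w).
  exact: simplicial_outside_cover.
have [|z [/setD1P[zw zS] zN zdeg zcl]] := IH _ cN not_cover.
  by rewrite (cardsD1 w S) wS.
have nbE : nb_in eF S z = nb_in eF (S :\ w) z.
  have nwz : eF z w = false by move: zN; rewrite inE zS symF => /negbTE.
  by apply/setP => u; rewrite !inE; have [->|] //= := eqVneq u w; rewrite nwz andbF.
exists z; rewrite nbE; split=> //.
by apply: contraNN zN => zQ; rewrite inE zS cQ // eq_sym.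
Qed.

Lemma simplicial_outside_component X Y :
  let R := induced eF (S :\ w) in
  X \in S :\ w -> Y \in S :\ w -> ~~ connect R X Y ->
  (forall x, x \in Q -> ~~ connect R X x) -> simplicial_outside S Q.
Proof.
move=> R XSw YSw nXY XQ; pose S1 := w |: [set y | connect R X y].
have S1S : S1 \subset S.
  apply/subsetP => y; rewrite !inE => /predU1P[-> // | Xy].
  by have /setD1P[] := induced_component_sub XSw Xy.
have S1_lt : #|S1| < #|S|.
  apply/proper_card/properP; split=> //; exists Y; first by case/setD1P: YSw.
  by rewrite !inE negb_or nXY andbT; case/setD1P: YSw.
have cw : clique eF [set w] by move=> u v /set1P-> /set1P->; rewrite eqxx.
have S1w : ~~ (S1 \subset [set w]).
  apply/subsetPn; exists X; first by rewrite !inE connect0 orbT.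
  by rewrite inE; case/setD1P: XSw.
have [z [zS1 /set1P/eqP zw zdeg zcl]] := IH S1_lt cw S1w.
have Xz : connect R X z by move: zS1; rewrite !inE (negbTE zw).
have zSw := induced_component_sub XSw Xz.
have nbE : nb_in eF S z = nb_in eF S1 z.
  apply/setP => u; rewrite !inE; have [-> | uw] //= := eqVneq u w; first by rewrite wS.
  case: (boolP (u \in S)) => uS; last first.
    apply/esym/negbTE; apply: contraNN uS.
    by case/andP=> /(induced_component_sub XSw)/setD1P[].
  case: (boolP (eF z u)) => zu; rewrite ?andbF ?andbT //; apply/esym.
  by apply: connect_trans Xz (connect1 _); rewrite /= zSw in_setD1 uw uS zu.
exists z; rewrite nbE; split=> //; first exact: (subsetP S1S).
by apply/negP => /XQ; rewrite Xz.
Qed.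

Lemma simplicial_outside_separator a b :
  a \in nb_in eF S w -> b \in nb_in eF S w -> a != b -> ~~ eF a b -> simplicial_outside S Q.
Proof.
move=> aN bN ab nab; set R := induced eF (S :\ w).
have Nw : nb_in eF S w \subset [set a; b].
  apply/subsetP => u uN; apply: contraT => uab.
  have : #|u |: [set a; b]| <= #|nb_in eF S w|.
    by apply: subset_leq_card; rewrite subUset sub1set uN subUset !sub1set aN bN.
  by rewrite cardsU1 uab cards2 ab; lia.
have [aSw bSw] := (nb_in_D1 irrF aN, nb_in_D1 irrF bN).
move: aN bN; rewrite !inE => /andP[_ wa] /andP[_ wb].
have nRab : ~~ connect R a b := chordal_separation symF irrF chF ab wa wb nab Nw.
have symR : connect_sym R by apply: sym_connect_sym => x y /=; rewrite symF andbCA.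
have [/exists_inP[x xQ ax] | ] := boolP [exists x in Q, connect R a x]; last first.
  rewrite negb_exists_in => /forall_inP aQ.
  by apply: (simplicial_outside_component aSw bSw nRab) => x /aQ.
apply: (simplicial_outside_component bSw aSw); first by rewrite symR.
move=> y yQ; apply/negP => by_; move/negP: nRab; apply.
have [xy | xy] := eqVneq x y; first by subst y; apply: connect_trans ax _; rewrite symR.
have xSw := induced_component_sub aSw ax; have ySw := induced_component_sub bSw by_.
have Rxy : R x y by rewrite /= xSw ySw cQ.
by rewrite (connect_trans ax) // (connect_trans (@connect1 _ R _ _ Rxy)) // symR.
Qed.

End InductionStep.

Lemma simplicial_outside_exists (S Q : {set VF}) :
  clique eF Q -> ~~ (S \subset Q) -> simplicial_outside S Q.
Proof.
have [n] := ubnP #|S|; elim: n => // n IH in S Q *; rewrite ltnS => Sn cQ SQ.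
have [w wS wdeg] : exists2 w, w \in S & #|nb_in eF S w| <= 2.
  by apply: degenerate; apply: contraNneq SQ => ->; rewrite sub0set.
have IHS (S' Q' : {set VF}) : #|S'| < #|S| ->
    clique eF Q' -> ~~ (S' \subset Q') -> simplicial_outside S' Q'.
  by move=> S'S; apply: IH; apply: leq_trans S'S Sn.
have [/cliqueP cN | ] :=
  boolP [forall a in nb_in eF S w, forall b in nb_in eF S w, (a != b) ==> eF a b].
  exact: (simplicial_outside_clique_nb cQ SQ wS wdeg IHS).
rewrite negb_forall_in => /exists_inP[a aN]; rewrite negb_forall_in => /exists_inP[b bN].
rewrite negb_imply => /andP[ab nab].
exact: (simplicial_outside_separator cQ SQ wS wdeg IHS aN bN ab nab).
Qed.

Lemma small_simplicial (S : {set VF}) : S != set0 ->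
  exists2 w, w \in S & #|nb_in eF S w| <= 2 /\ clique eF (nb_in eF S w).
Proof.
move=> S0; have cl0 : clique eF set0 by move=> a b; rewrite inE.
have [|w [wS _ wdeg wcl]] := @simplicial_outside_exists S _ cl0.
  by rewrite subset0.
by exists w.
Qed.

End SmallSimplicial.

Theorem mainTheorem8 (V V' : finType) (e : rel V) (e' : rel V')
  (hG : simple_graph e) (hG' : simple_graph e')
  (nG : no_isolated e) (nG' : no_isolated e') :
  (exists (VF : finType) (eF : rel VF),
      [/\ simple_graph eF, chordal eF, treewidth_le eF 2 &
          hom_count eF e <> hom_count eF e']) ->
  eb_distinguishable e e'.
Proof.
case=> VF [eF [[symF irrF] chF twF hom_neq]].
have [eqV | /eqP neqV] := eqVneq #|V| #|V'|; last by left.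
have [? | same_colors] := classic (exists l, eb_graph e l <> eb_graph e' l); first by right.
exfalso; apply: hom_neq; rewrite !hom_count_weighted_hom.
have eqG l : eb_graph e l = eb_graph e' l.
  by have [// | /eqP neq] := eqVneq (eb_graph e l) (eb_graph e' l); case: same_colors; exists l.
have simplicial := small_simplicial symF irrF chF (treewidth_degenerate irrF twF).
case: hG hG' => [symE _] [symE' _].
apply: (weighted_hom_eq symF irrF simplicial symE symE' nG nG' eqV eqG (l := 0)).
split=> [a _ | a b _ _ _ | a b x y /negbTE -> | a b x y /negbTE ->] //.
- exact: vertex_det_cst.
- by exists (fun _ => 1); split=> u v ->.
Qed.
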